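(* Let $E$ be a finite set and $\underline I=(I_\omega)_{\omega\in E}$ a family of non-empty finite sets. For causal orders $\Omega,\Omega'$ on $E$, $$\mathrm{ExtHist}(\Omega,\underline I)\cap\mathrm{ExtHist}(\Omega',\underline I)=\mathrm{ExtHist}(\Omega\vee\Omega',\underline I)\quad\text{and}\quad \mathrm{Hist}(\Omega,\underline I)\vee\mathrm{Hist}(\Omega',\underline I)=\mathrm{Hist}(\Omega\vee\Omega',\underline I).$$
   Context: A causal order $\Omega$ on $E$ is a preorder $\le_\Omega$; $\downarrow\omega=\{\xi:\xi\le_\Omega\omega\}$; $\Lambda(\Omega)$ is its set of lowersets. $\Omega\vee\Omega'$ is the order whose relation is the transitive closure of $\le_\Omega\cup\le_{\Omega'}$. Partial functions on $\underline I$: $f$ with $\mathrm{dom}(f)\subseteq E$, $f(\omega)\in I_\omega$. $\mathrm{Hist}(\Omega,\underline I)=\bigcup_{\xi\in E}\prod_{\omega\in\downarrow\xi}I_\omega$; $\mathrm{ExtHist}(\Omega,\underline I)=\bigcup_{U\in\Lambda(\Omega)}\prod_{\omega\in U}I_\omega$. Compatible = agreeing on common domain; compatible sets $\mathcal F$ have join $\bigvee\mathcal F$ (union). For a set $\Theta$, $\mathrm{Ext}(\Theta)=\{\bigvee\mathcal F:\emptyset\ne\mathcal F\subseteq\Theta\text{ compatible}\}$; for a set $W$, $\mathrm{Prime}(W)=\{w\in W:\text{for all compatible }\mathcal F\subseteq W,\ w=\bigvee\mathcal F\Rightarrow w\in\mathcal F\}$. The join of spaces of input histories is $\Theta\vee\Theta'=\mathrm{Prime}(\mathrm{Ext}(\Theta)\cap\mathrm{Ext}(\Theta'))$.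 *)

From mathcomp Require Import all_boot.
From Stdlib Require Import Relations.

Set Implicit Arguments.
Unset Strict Implicit.
Unset Printing Implicit Defensive.

Section Defs.
Variables (E : finType) (I : E -> finType).

Definition causal_order (le : E -> E -> Prop) : Prop :=
  (forall x, le x x) /\ (forall x y z, le x y -> le y z -> le x z).

Definition join_order (le1 le2 : E -> E -> Prop) : E -> E -> Prop :=
  clos_trans E (fun a b => le1 a b \/ le2 a b).

Definition down (le : E -> E -> Prop) (xi : E) : E -> Prop := fun w => le w xi.

Definition lowerset (le : E -> E -> Prop) (U : E -> Prop) : Prop :=
  forall x y, le x y -> U y -> U x.

Definition pfun := forall w : E, option (I w).

Definition dom (f : pfun) : E -> Prop := fun w => f w <> None.

(* f in prod_{w in U} I_w, i.e. dom f = U *)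
Definition has_dom (U : E -> Prop) (f : pfun) : Prop := forall w, dom f w <-> U w.

Definition Hist (le : E -> E -> Prop) : pfun -> Prop :=
  fun f => exists xi, has_dom (down le xi) f.

Definition ExtHist (le : E -> E -> Prop) : pfun -> Prop :=
  fun f => exists U, lowerset le U /\ has_dom U f.

Definition compatible2 (f g : pfun) : Prop :=
  forall w x y, f w = Some x -> g w = Some y -> x = y.

Definition compatible (F : pfun -> Prop) : Prop :=
  forall f g, F f -> F g -> compatible2 f g.

Definition is_join (F : pfun -> Prop) (h : pfun) : Prop :=
  forall w x, h w = Some x <-> exists f, F f /\ f w = Some x.

Definition Ext (Th : pfun -> Prop) : pfun -> Prop :=
  fun h => exists F : pfun -> Prop,
    (exists f, F f) /\ (forall f, F f -> Th f) /\ compatible F /\ is_join F h.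

Definition Prime (W : pfun -> Prop) : pfun -> Prop :=
  fun w => W w /\ forall F : pfun -> Prop,
    (forall f, F f -> W f) -> compatible F -> is_join F w -> F w.

Definition join_space (Th Th' : pfun -> Prop) : pfun -> Prop :=
  Prime (fun h => Ext Th h /\ Ext Th' h).

End Defs.

From mathcomp Require Import all_boot.
From Stdlib Require Import Relations ClassicalEpsilon FunctionalExtensionality.

Set Implicit Arguments.
Unset Strict Implicit.

(* An extended history is a partial function whose domain is a lowerset, and a
   set is a lowerset of the join order iff it is a lowerset of both orders.
   For a preorder, the compatible joins of histories are exactly the partial
   functions with a non-empty lowerset domain, and among these the prime ones
   are the histories: a function with domain the down-set of xi equals the
   member of any family joining to it whose domain contains xi, while a prime
   function is the join of its restrictions to the down-sets of the points of
   its domain, hence one of them. *)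

Section Histories.
Variables (E : finType) (I : E -> finType).
Implicit Types (le : E -> E -> Prop) (U : E -> Prop) (f g h : pfun I)
  (F : pfun I -> Prop).

Lemma dom_Some f w : dom f w -> exists x, f w = Some x.
Proof. unfold dom; destruct (f w) as [x|]; [eauto | congruence]. Qed.

Lemma ExtHist_iff_lowerset_dom le f : ExtHist le f <-> lowerset le (dom f).
Proof.
  split.
  - intros [U [LU HU]] x y Hxy Hy. apply HU, (LU x y Hxy), HU, Hy.
  - intros L. exists (dom f). split; [exact L | intros w; reflexivity].
Qed.

Lemma lowerset_join_order le1 le2 U :
  lowerset (join_order le1 le2) U <-> lowerset le1 U /\ lowerset le2 U.
Proof.
  split.
  - intros L. split; intros x y Hxy; apply L, t_step; auto.
  - intros [L1 L2] x y Hxy.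
    induction Hxy as [x y [Hxy | Hxy] | x y z _ IHxy _ IHyz]; eauto.
Qed.

Lemma join_order_refl le1 le2 :
  reflexive E le1 -> reflexive E (join_order le1 le2).
Proof. intros R x. apply t_step. left. apply R. Qed.

Lemma join_order_trans le1 le2 : transitive E (join_order le1 le2).
Proof. intros x y z. apply t_trans. Qed.

Lemma Hist_dom_lowerset le f : transitive E le -> Hist le f -> lowerset le (dom f).
Proof. intros T [xi D] x y Hxy Hy. apply D. apply D in Hy. exact (T _ _ _ Hxy Hy). Qed.

Lemma join_Some F h f w x : is_join F h -> F f -> f w = Some x -> h w = Some x.
Proof. intros J Ff Hf. apply J. eauto. Qed.

Lemma dom_join F h w : is_join F h -> dom h w <-> exists f, F f /\ dom f w.
Proof.
  intros J. split.
  - intros Hw. destruct (dom_Some Hw) as [x Hx].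
    apply J in Hx as [f [Ff Hf]]. exists f. split; [exact Ff | unfold dom; congruence].
  - intros [f [Ff Hw]]. destruct (dom_Some Hw) as [x Hx].
    unfold dom. rewrite (join_Some J Ff Hx). discriminate.
Qed.

Lemma join_member_eq F h f :
  is_join F h -> F f -> (forall w, dom h w -> dom f w) -> f = h.
Proof.
  intros J Ff Hsub. apply functional_extensionality_dep. intros w.
  destruct (f w) as [x|] eqn:Hf.
  - symmetry. exact (join_Some J Ff Hf).
  - destruct (h w) eqn:Hh; [exfalso | reflexivity].
    apply (Hsub w); [unfold dom; congruence | exact Hf].
Qed.

Definition restrict (P : E -> Prop) h : pfun I :=
  fun w => if excluded_middle_informative (P w) then h w else None.

Lemma restrict_Some P h w x : restrict P h w = Some x -> h w = Some x.
Proof. unfold restrict. destruct excluded_middle_informative; [auto | discriminate]. Qed.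

Lemma restrict_in P h w : P w -> restrict P h w = h w.
Proof. unfold restrict. destruct excluded_middle_informative; [reflexivity | contradiction]. Qed.

Lemma dom_restrict P h w : dom (restrict P h) w <-> P w /\ dom h w.
Proof.
  unfold dom, restrict. destruct excluded_middle_informative; intuition congruence.
Qed.

Definition down_restrictions le h : pfun I -> Prop :=
  fun g => exists xi, dom h xi /\ g = restrict (down le xi) h.

Lemma down_restrictions_compatible le h : compatible (down_restrictions le h).
Proof.
  intros f g [a [_ ->]] [b [_ ->]] w x y Hx Hy.
  apply restrict_Some in Hx, Hy. congruence.
Qed.

Lemma down_restrictions_join le h :
  reflexive E le -> is_join (down_restrictions le h) h.
Proof.
  intros R w x. split.
  - intros Hw. exists (restrict (down le w) h). split.
    + exists w. split; [unfold dom; congruence | reflexivity].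
    + rewrite restrict_in; [exact Hw | apply R].
  - intros [f [[xi [_ ->]] Hf]]. exact (restrict_Some Hf).
Qed.

Lemma down_restrictions_Hist le h g :
  lowerset le (dom h) -> down_restrictions le h g -> Hist le g.
Proof.
  intros L [xi [Hxi ->]]. exists xi. intros w. rewrite dom_restrict.
  split; [tauto | intros Hw; exact (conj Hw (L w xi Hw Hxi))].
Qed.

Section Preorder.
Variable le : E -> E -> Prop.
Hypotheses (le_refl : reflexive E le) (le_trans : transitive E le).

Lemma Ext_Hist_iff h :
  Ext (Hist le) h <-> (exists w, dom h w) /\ lowerset le (dom h).
Proof.
  split.
  - intros [F [[f0 Ff0] [FH [_ J]]]]. split.
    + destruct (FH f0 Ff0) as [xi D]. exists xi.
      apply (dom_join _ J). exists f0. split; [exact Ff0 | apply D, le_refl].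
    + intros x y Hxy Hy. apply (dom_join _ J) in Hy as [f [Ff Hy]].
      apply (dom_join _ J). exists f. split; [exact Ff|].
      exact (Hist_dom_lowerset le_trans (FH f Ff) Hxy Hy).
  - intros [[w Hw] L]. exists (down_restrictions le h).
    split; [|split; [|split]].
    + exists (restrict (down le w) h). exists w. split; [exact Hw | reflexivity].
    + intros g. apply down_restrictions_Hist, L.
    + apply down_restrictions_compatible.
    + apply down_restrictions_join, le_refl.
Qed.

Lemma Prime_iff_Hist (W : pfun I -> Prop) :
  (forall h, W h <-> (exists w, dom h w) /\ lowerset le (dom h)) ->
  forall h, Prime W h <-> Hist le h.
Proof.
  intros HW h.
  assert (Hist_W : forall g, Hist le g -> W g).
  { intros g Hg. apply HW. split; [|exact (Hist_dom_lowerset le_trans Hg)].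
    destruct Hg as [xi D]. exists xi. apply D, le_refl. }
  split.
  - intros [Wh Hprime]. apply HW in Wh as [_ L].
    assert (Hh : down_restrictions le h h).
    { apply (Hprime (down_restrictions le h)).
      - intros g Hg. apply Hist_W. exact (down_restrictions_Hist L Hg).
      - apply down_restrictions_compatible.
      - apply down_restrictions_join, le_refl. }
    exact (down_restrictions_Hist L Hh).
  - intros Hh. split; [exact (Hist_W h Hh)|]. intros F FW _ J.
    destruct Hh as [xi D].
    (* the member of F defined at xi is defined on all of down xi = dom h *)
    destruct (proj1 (dom_join _ J) (proj2 (D xi) (le_refl xi))) as [f [Ff Hf]].
    replace h with f; [exact Ff|]. apply (join_member_eq J Ff).
    intros w Hw. destruct (proj1 (HW f) (FW f Ff)) as [_ Lf].
    exact (Lf w xi (proj1 (D w) Hw) Hf).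
Qed.

End Preorder.
End Histories.

Theorem proposition8 (E : finType) (I : E -> finType)
  (HI : forall w : E, inhabited (I w))
  (le1 le2 : E -> E -> Prop)
  (H1 : causal_order le1) (H2 : causal_order le2) :
  (forall f : pfun I,
     ExtHist le1 f /\ ExtHist le2 f <-> ExtHist (join_order le1 le2) f) /\
  (forall f : pfun I,
     join_space (Hist le1) (Hist le2) f <-> Hist (I:=I) (join_order le1 le2) f).
Proof.
  destruct H1 as [R1 T1], H2 as [R2 T2]. split.
  { intros f. rewrite !ExtHist_iff_lowerset_dom lowerset_join_order. reflexivity. }
  apply Prime_iff_Hist; [exact (join_order_refl le2 R1) | apply join_order_trans|].
  intros h. rewrite (Ext_Hist_iff R1 T1) (Ext_Hist_iff R2 T2) lowerset_join_order.
  tauto.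
Qed.
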